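(* Let $\mathcal P$ consist of exactly two propositional variables, let $\mathcal E=\mathcal L_{\mathcal P}^*/\!\equiv$ be the set of consistent formulas modulo logical equivalence, and let $B(\varphi)=\varphi$ for every $\varphi\in\mathcal E$. Let $\nabla$ be an ES basic fusion operator on this epistemic space whose representing basic assignment $\Phi\mapsto\succeq_\Phi$ satisfies the Maximality Condition. Then $\nabla$ does not satisfy (ESF-SD).
   Context: $\mathcal W_{\mathcal P}$ denotes valuations, $[\![\phi]\!]$ models, $\varphi_M$ a formula with models exactly $M$. Agents form a well-ordered set $\mathcal S$; a society is a nonempty finite $N\subseteq\mathcal S$; an $N$-profile is $\Phi:N\to\mathcal E$, $E_i=\Phi(i)$, identified with $E_i$ if $N=\{i\}$; profiles on $\{i_1<\dots<i_n\}$ and $\{j_1<\dots<j_m\}$ are equivalent if $n=m$ and entries coincide position-wise. An ES combination operator maps (profile, $E\in\mathcal E$) to $\nabla(\Phi,E)\in\mathcal E$; it is an ES basic fusion operator if (ESF1) $B(\nabla(\Phi,E))\vdash B(E)$; (ESF2) equivalent profiles and $B(E)\equiv B(E')$ give $B(\nabla(\Phi,E))\equiv B(\nabla(\Phi',E'))$; (ESF3) if $B(E)\equiv B(E')\wedge B(E'')$ then $B(\nabla(\Phi,E'))\wedge B(E'')\vdash B(\nabla(\Phi,E))$; (ESF4) if moreover $B(\nabla(\Phi,E'))\wedge B(E'')\nvdash\bot$ then $B(\nabla(\Phi,E))\vdash B(\nabla(\Phi,E'))\wedge B(E'')$. For such $\nabla$ there is a unique assignment $\Phi\mapsto\succeq_\Phi$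 (total preorders on $\mathcal W_{\mathcal P}$, equal on equivalent profiles) with $[\![B(\nabla(\Phi,E))]\!]=\max([\![B(E)]\!],\succeq_\Phi)$, where $\max(C,\succeq)=\{c\in C:c\succeq x\ \forall x\in C\}$. Maximality Condition: $[\![B(E_i)]\!]=\max(\succeq_{E_i})$ for every agent $i$ and $i$-profile $E_i$. (ESF-SD): for every agent $i$, every three interpretations $w,w',w''$ and every $E_{w,w'},E_{w',w''}$ with $[\![B(E_{w,w'})]\!]=\{w,w'\}$, $[\![B(E_{w',w''})]\!]=\{w',w''\}$, for each of the following four requirements there exists an $i$-profile $E_i$ meeting it: (i) $B(\nabla(E_i,E_{w,w'}))\equiv\varphi_{w,w'}$ and $B(\nabla(E_i,E_{w',w''}))\equiv\varphi_{w',w''}$; (ii) $\equiv\varphi_{w,w'}$ and $\equiv\varphi_{w'}$; (iii) $\equiv\varphi_w$ and $\equiv\varphi_{w',w''}$; (iv) $\equiv\varphi_w$ and $\equiv\varphi_{w'}$. *)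

From Stdlib Require Import Sorting.Sorted.
From HB Require Import structures.
From mathcomp Require Import all_boot.

Set Implicit Arguments.
Unset Strict Implicit.
Unset Printing Implicit Defensive.

(* P = {p, q}: a valuation is the pair (truth value of p, truth value of q). *)
Definition valuation : finType := (bool * bool)%type.

(* E = consistent formulas modulo logical equivalence: a class of formulas is
   identified with its (nonempty) set of models. *)
Definition estate := {A : {set valuation} | A != set0}.

(* [[B(e)]] with B the identity: the models of e. *)
Definition mods (e : estate) : {set valuation} := val e.

(* An N-profile for a society N = {i_1 < ... < i_n}: the list of pairs
   (i_k, E_{i_k}), strictly increasing in the agent order, nonempty. *)
Record profile (S : Type) (lt : S -> S -> Prop) := Profile {
  entries : seq (S * estate);
  entries_nonempty : entries <> [::];
  entries_sorted : Sorted (fun a b => lt a.1 b.1) entries }.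

Definition equiv_prof S lt (P1 P2 : @profile S lt) :=
  map snd (entries P1) = map snd (entries P2).

Lemma single_nonempty S (i : S) (e : estate) : [:: (i, e)] <> [::].
Proof. by []. Qed.

Lemma single_sorted S (lt : S -> S -> Prop) (i : S) (e : estate) :
  Sorted (fun a b => lt a.1 b.1) [:: (i, e)].
Proof. by constructor; constructor. Qed.

Definition single S (lt : S -> S -> Prop) (i : S) (e : estate) : profile lt :=
  Profile (@single_nonempty S i e) (@single_sorted S lt i e).

Section Fusion.
Variables (S : Type) (lt : S -> S -> Prop).
Variable nab : profile lt -> estate -> estate.

Definition ESF1 := forall P E, mods (nab P E) \subset mods E.
Definition ESF2 := forall P P' E E', equiv_prof P P' -> mods E = mods E' ->
  mods (nab P E) = mods (nab P' E').
Definition ESF3 := forall P E E' E'', mods E = mods E' :&: mods E'' ->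
  mods (nab P E') :&: mods E'' \subset mods (nab P E).
Definition ESF4 := forall P E E' E'', mods E = mods E' :&: mods E'' ->
  mods (nab P E') :&: mods E'' != set0 ->
  mods (nab P E) \subset mods (nab P E') :&: mods E''.
Definition ES_basic_fusion := [/\ ESF1, ESF2, ESF3 & ESF4].

(* x >= y read as  r x y *)
Definition total_preorder (r : rel valuation) := total r /\ transitive r.

Definition maxel (C : {set valuation}) (r : rel valuation) : {set valuation} :=
  [set c in C | [forall x in C, r c x]].

Definition represents (pref : profile lt -> rel valuation) :=
  [/\ forall P, total_preorder (pref P),
      forall P P', equiv_prof P P' -> pref P =2 pref P' &
      forall P E, mods (nab P E) = maxel (mods E) (pref P)].

Definition maximality (pref : profile lt -> rel valuation) :=
  forall (i : S) (e : estate), mods e = maxel setT (pref (single lt i e)).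

Definition ESF_SD :=
  forall (i : S) (w w' w'' : valuation),
    w != w' -> w' != w'' -> w != w'' ->
    forall E1 E2 : estate,
      mods E1 = [set w; w'] -> mods E2 = [set w'; w''] ->
      [/\ (exists e, mods (nab (single lt i e) E1) = [set w; w'] /\
                     mods (nab (single lt i e) E2) = [set w'; w'']),
          (exists e, mods (nab (single lt i e) E1) = [set w; w'] /\
                     mods (nab (single lt i e) E2) = [set w']),
          (exists e, mods (nab (single lt i e) E1) = [set w] /\
                     mods (nab (single lt i e) E2) = [set w'; w'']) &
          (exists e, mods (nab (single lt i e) E1) = [set w] /\
                     mods (nab (single lt i e) E2) = [set w'])].
End Fusion.

From HB Require Import structures.
From mathcomp Require Import all_boot.

Set Implicit Arguments.
Unset Strict Implicit.
Unset Printing Implicit Defensive.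

(* Fix an agent i and three of the four valuations x, y, z; let d be the
   fourth one.  Requirements (iii) and (iv) of (ESF-SD) for the triple
   (x, y, z), and (iv) for (x, z, y), yield three i-profiles whose preorders
   all put x strictly above y and z, but which pairwise disagree on y and z.
   By the Maximality Condition their models avoid y and z, so they are
   nonempty subsets of {x, d}; there are only three of these, hence one of the
   profiles is the state {d}.  Doing this for x = a, y = b and for x = b, y = a
   shows that the preorder of the i-profile {d} puts a strictly above b and b
   strictly above a. *)

Lemma mem_maxel_pair (r : rel valuation) x y : total r ->
  (x \in maxel [set x; y] r) = r x y.
Proof.
move=> r_total; rewrite inE !inE eqxx /=.
apply/forallP/idP => [xmax | rxy z].
- by have := xmax y; rewrite !inE eqxx orbT.
- apply/implyP; rewrite !inE => /orP[]/eqP-> //.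
  by have := r_total x x; rewrite orbb.
Qed.

Lemma maxel_pair_indiff (r : rel valuation) x y : total r ->
  maxel [set x; y] r = [set x; y] -> r x y /\ r y x.
Proof.
move=> r_total max_xy; split.
- by rewrite -mem_maxel_pair // max_xy !inE eqxx.
- by rewrite -mem_maxel_pair // setUC max_xy !inE eqxx orbT.
Qed.

Lemma maxel_pair_strict (r : rel valuation) x y : total r -> x != y ->
  maxel [set x; y] r = [set x] -> r x y /\ ~~ r y x.
Proof.
move=> r_total neq_xy max_x; split.
- by rewrite -mem_maxel_pair // max_x inE.
- by rewrite -mem_maxel_pair // setUC max_x inE eq_sym.
Qed.

Lemma estate_inj (e1 e2 : estate) : mods e1 = mods e2 -> e1 = e2.
Proof. exact: val_inj. Qed.

Lemma mods_neq0 (e : estate) : exists x, x \in mods e.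
Proof. by case: e => A nzA; have /set0Pn[x xA] := nzA; exists x. Qed.

Lemma estate_pair_pigeonhole x d (P : estate -> Prop) (e1 e2 e3 : estate) :
  (forall e, P e -> mods e \subset [set x; d]) ->
  P e1 -> P e2 -> P e3 -> e1 <> e2 -> e1 <> e3 -> e2 <> e3 ->
  exists e, P e /\ mods e = [set d].
Proof.
move=> subP P1 P2 P3 n12 n13 n23.
have eq_on_d f g : P f -> P g -> x \in mods f -> x \in mods g ->
    (d \in mods f) = (d \in mods g) -> f = g.
  move=> /subP/subsetP subf /subP/subsetP subg xf xg eq_d.
  apply/estate_inj/setP => w; case: (boolP (w \in [set x; d])) => [|w_out].
    by rewrite !inE => /orP[]/eqP->; rewrite ?xf ?xg.
  by apply/idP/idP => [/subf | /subg]; rewrite (negbTE w_out).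
suff [e Pe x_out] : exists2 e, P e & x \notin mods e.
  exists e; split=> //; apply/eqP; rewrite eqEsubset; apply/andP; split.
    apply/subsetP=> w w_in; have := subsetP (subP e Pe) w w_in.
    by rewrite !inE => /orP[/eqP wx|//]; rewrite -wx w_in in x_out.
  have [w w_in] := mods_neq0 e; have := subsetP (subP e Pe) w w_in.
  rewrite !inE => /orP[/eqP wx|/eqP wd]; first by rewrite -wx w_in in x_out.
  by rewrite sub1set -wd.
case x1: (x \in mods e1); last by exists e1; rewrite ?x1.
case x2: (x \in mods e2); last by exists e2; rewrite ?x2.
case x3: (x \in mods e3); last by exists e3; rewrite ?x3.
exfalso; case d1: (d \in mods e1); case d2: (d \in mods e2);
  case d3: (d \in mods e3);
first [ by apply: n12; apply: eq_on_d; rewrite ?x1 ?x2 ?d1 ?d2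
      | by apply: n13; apply: eq_on_d; rewrite ?x1 ?x3 ?d1 ?d3
      | by apply: n23; apply: eq_on_d; rewrite ?x2 ?x3 ?d2 ?d3 ].
Qed.

Section SingleAgent.

Variables (S : Type) (lt : S -> S -> Prop).
Variable nab : profile lt -> estate -> estate.
Variable pref : profile lt -> rel valuation.
Hypothesis pref_repr : represents nab pref.
Hypothesis pref_max : maximality pref.
Variable i : S.

Let r (e : estate) := pref (single lt i e).

Lemma pref_total e : total (r e).
Proof. by case: pref_repr => /(_ (single lt i e)) []. Qed.

Lemma pref_trans e : transitive (r e).
Proof. by case: pref_repr => /(_ (single lt i e)) []. Qed.

Lemma nab_single_maxel e E :
  mods (nab (single lt i e) E) = maxel (mods E) (r e).
Proof. by case: pref_repr. Qed.

Lemma pref_mods_top e y z : y \in mods e -> r e y z.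
Proof. by rewrite (pref_max i e) inE => /andP[_ /forallP/(_ z)]; rewrite inE. Qed.

Lemma nab_pair_indiff e E x y : mods E = [set x; y] ->
  mods (nab (single lt i e) E) = [set x; y] -> r e x y /\ r e y x.
Proof. by rewrite nab_single_maxel => ->; apply: maxel_pair_indiff (pref_total e). Qed.

Lemma nab_pair_strict e E x y : mods E = [set x; y] -> x != y ->
  mods (nab (single lt i e) E) = [set x] -> r e x y /\ ~~ r e y x.
Proof. by rewrite nab_single_maxel => ->; apply: maxel_pair_strict (pref_total e). Qed.

Definition strict_top e x y z := ~~ r e y x && ~~ r e z x.

Lemma strict_top_mods_sub x y z d e :
  (forall v, [|| v == x, v == y, v == z | v == d]) ->
  strict_top e x y z -> mods e \subset [set x; d].
Proof.
move=> cover /andP[yx zx]; apply/subsetP => w w_in.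
have := cover w; rewrite !inE.
case/or4P => /eqP w_eq; rewrite w_eq ?eqxx ?orbT //; subst w.
- by rewrite (pref_mods_top _ w_in) in yx.
- by rewrite (pref_mods_top _ w_in) in zx.
Qed.

Lemma ESF_SD_strict_tops x y z : x != y -> y != z -> x != z ->
  ESF_SD nab ->
  exists e1 e2 e3, [/\ e1 <> e2, e1 <> e3, e2 <> e3 &
    [/\ strict_top e1 x y z, strict_top e2 x y z & strict_top e3 x y z]].
Proof.
move=> nxy nyz nxz sd.
have pair_est u v : {E : estate | mods E = [set u; v]}.
  have nz : [set u; v] != set0 by apply/set0Pn; exists u; rewrite !inE eqxx.
  by exists (exist (fun A => A != set0) _ nz).
have [Exy mxy] := pair_est x y; have [Exz mxz] := pair_est x z.
have [Eyz myz] := pair_est y z.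
have mzy : mods Eyz = [set z; y] by rewrite setUC.
have [_ _ [e1 [h11 h12]] [e2 [h21 h22]]] := sd i x y z nxy nyz nxz Exy Eyz mxy myz.
have [_ _ _ [e3 [h31 h32]]] :=
  sd i x z y nxz (contra_neq esym nyz) nxy Exz Eyz mxz mzy.
have [_ yx1] := nab_pair_strict mxy nxy h11.
have [yz1 zy1] := nab_pair_indiff myz h12.
have [xy2 yx2] := nab_pair_strict mxy nxy h21.
have [_ zy2] := nab_pair_strict myz nyz h22.
have [xz3 zx3] := nab_pair_strict mxz nxz h31.
have [_ yz3] := nab_pair_strict mzy (contra_neq esym nyz) h32.
exists e1, e2, e3; split; last split.
- by move=> e12; move: zy2; rewrite -e12 zy1.
- by move=> e13; move: yz3; rewrite -e13 yz1.
- move=> e23; have := pref_total e2 y z.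
  by rewrite (negbTE zy2) orbF e23 (negbTE yz3).
- rewrite /strict_top yx1 /=; move: yx1; apply: contraNN => zx.
  exact: pref_trans yz1 zx.
- rewrite /strict_top yx2 /=; move: zy2; apply: contraNN => zx.
  exact: pref_trans zx xy2.
- rewrite /strict_top zx3 andbT; move: yz3; apply: contraNN => yx.
  exact: pref_trans yx xz3.
Qed.

Lemma strict_top_asym e x y z z' : strict_top e x y z -> ~ strict_top e y x z'.
Proof.
move=> /andP[yx _] /andP[xy _]; have := pref_total e x y.
by rewrite (negbTE yx) (negbTE xy).
Qed.

Lemma ESF_SD_strict_top_singleton x y z d :
  (forall v, [|| v == x, v == y, v == z | v == d]) ->
  x != y -> y != z -> x != z -> ESF_SD nab ->
  exists e, strict_top e x y z /\ mods e = [set d].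
Proof.
move=> cover nxy nyz nxz sd.
have [e1 [e2 [e3 [n12 n13 n23 [top1 top2 top3]]]]] :=
  ESF_SD_strict_tops nxy nyz nxz sd.
exact: estate_pair_pigeonhole (fun e => @strict_top_mods_sub _ _ _ _ e cover)
  top1 top2 top3 n12 n13 n23.
Qed.

End SingleAgent.

Theorem theorem4 (S : Type) (lt : S -> S -> Prop)
  (lt_irrefl : forall x, ~ lt x x)
  (lt_trans : forall x y z, lt x y -> lt y z -> lt x z)
  (lt_total : forall x y, x = y \/ lt x y \/ lt y x)
  (lt_wf : well_founded lt)
  (s0 : S)
  (nab : profile lt -> estate -> estate) :
  ES_basic_fusion nab ->
  (exists pref, represents nab pref /\ maximality pref) ->
  ~ ESF_SD nab.
Proof.
move=> _ [pref [repr maxi]] sd.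
have cover (v : valuation) :
    [|| v == (false, false), v == (false, true), v == (true, false) | v == (true, true)].
  by case: v => [[] []].
have cover' (v : valuation) :
    [|| v == (false, true), v == (false, false), v == (true, false) | v == (true, true)].
  by case: v => [[] []].
have [e [top_ab mods_e]] :=
  ESF_SD_strict_top_singleton repr maxi s0 cover isT isT isT sd.
have [e' [top_ba mods_e']] :=
  ESF_SD_strict_top_singleton repr maxi s0 cover' isT isT isT sd.
have e'_e : e' = e by apply: estate_inj; rewrite mods_e mods_e'.
by rewrite e'_e in top_ba; exact: (strict_top_asym repr top_ab top_ba).
Qed.
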